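(* Let $T=(p,q:F\to E)$ be an LR textile system with $p$ surjective and $F$ source-free, and let $\Lambda=\Lambda_T$. Suppose that for each $z\in E^0$ we have a partition $\{\mathcal E^1_z,\dots,\mathcal E^{m(z)}_z\}$ of $zE^1$ into nonempty sets such that for each $u\in F^0$ there are $z\in E^0$ and $j$ with $q(uF^1)\subseteq\mathcal E^j_z$. For $v\in F^0$, $1\le i\le m(p(v))$, set $\mathcal F^i_v=vF^1\cap p^{-1}(\mathcal E^i_{p(v)})$, and for $z\in E^0$, $1\le i\le m(z)$, set $\mathcal G^i_z=\mathcal E^i_z\sqcup r_F(q^{-1}(\mathcal E^i_z))$. Let $\widetilde F$ be the directed-graph insplit of $F$ with respect to $\{\mathcal F^i_v\}$ and $\widetilde E$ that of $E$ with respect to $\{\mathcal E^i_z\}$, and define $\tilde p(v^i)=p(v)^i$, $\tilde p(\lambda^i)=p(\lambda)^i$, $\tilde q(v^i)=q(v)^j$, $\tilde q(\lambda^i)=q(\lambda)^j$ for $\lambda\in F^1$, $v\in F^0$, where (for $\lambda$) $v=s(\lambda)$ and $j$ is the index with $q(vF^1)\subseteq\mathcal E^j_{q(v)}$. Then (1) $\{\mathcal F^i_v\}$ is a partition of $F^1$ into nonempty sets, $\tilde p,\tilde q:\widetilde F\to\widetilde E$ are well-defined graph homomorphisms and $\widetilde T=(\tilde p,\tilde q:\widetilde F\to\widetilde E)$ is an LR textile system; (2) $\{\mathcal G^i_z\}$ is a partition of $\Lambda^1=E^1\sqcup F^0$ satisfying the pairing condition; (3) the 2-graph $\Lambda_{\widetilde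 T}$ coincides with the 2-graph $\Lambda_I$ obtained by 2-graph insplitting $\Lambda$ with respect to $\{\mathcal G^i_z\}$.
   Context: Directed graph $E=(E^0,E^1,r,s)$, $zE^1=r^{-1}(z)$; $F$ source-free: $r$ onto $F^0$. Textile system $T=(p,q:F\to E)$: graph homomorphisms $p,q$ (commuting with $r,s$) with $f\mapsto(r(f),p(f),s(f),q(f))$ injective on $F^1$. LR: $p$ has unique $r$-path lifting (for $v\in F^0,e\in E^1$ with $p(v)=r(e)$, exactly one $f\in F^1$ with $r(f)=v,p(f)=e$) and $q$ has unique $s$-path lifting (same with $s$). Directed-graph insplitting: with partitions of $vF^1$ into nonempty $\mathcal F^1_v,\dots,\mathcal F^{m(v)}_v$, the insplit graph has vertices $v^i$, edges $f^j$ ($1\le j\le m(s(f))$), $s(f^j)=s(f)^j$, $r(f^j)=r(f)^k$ if $f\in\mathcal F^k_{r(f)}$. 2-graph: category $\Lambda$ with degree functor $d:\Lambda\to\mathbb N^2$ having unique factorization; $\Lambda^m=d^{-1}(m)$; $\lambda(m,n)$ is the factor of degree $n-m$ at position $[m,n]$; determined by its 1-skeleton and commuting squares. $\Lambda_T$: vertices $E^0$, color-1 edges $E^1$, color-2 edges $F^0$ with $r(w)=q(w)$, $s(w)=p(w)$; commuting squares $ve\sim e'w$ iff some $f\in F^1$ has $r(f)=v,s(f)=w,p(f)=e,q(f)=e'$. The pairing condition for a partition $\{\mathcal G^j_z\}$ of $\Lambda^1$ (with $\{\mathcal G^j_z\}_j$ a partition of the edges with range $z$): for every $\lambda\in\Lambda^{\varepsilon_1+\varepsilon_2}$,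 $\lambda(0,\varepsilon_1)$ and $\lambda(0,\varepsilon_2)$ are in the same set. Insplit 2-graph $\Lambda_I$: vertices $z^i$; edges $f^i$ ($1\le i\le m(s(f))$), same degree, $s(f^i)=s(f)^i$, $r(f^i)=r(f)^j$ where $f\in\mathcal G^j_{r(f)}$; commuting squares $f^ig^k\sim_I a^jb^k$ iff $g\in\mathcal G^i_{s(f)}$, $b\in\mathcal G^j_{s(a)}$, $fg\sim ab$ in $\Lambda$. ''Coincides'' means: same vertices $z^i$, same edges $e^i$ and $v^i$ with same degree, range, source and same commuting squares. *)

From mathcomp Require Import all_boot.
Set Implicit Arguments.
Unset Strict Implicit.
Unset Printing Implicit Defensive.

(* A genuine graph E = (E^0,E^1,r,s) is [full_graph r s] (every        *)
(* element valid); insplit graphs live on raw carriers V*nat, E*nat    *)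
(* and their vertex/edge sets are cut out by the predicates okV/okE.   *)
Record pgraph := PGraph {
  gV : Type; gE : Type;
  okV : gV -> Prop; okE : gE -> Prop;
  rg : gE -> gV; sg : gE -> gV }.
Arguments okV {p} _. Arguments okE {p} _. Arguments rg {p} _. Arguments sg {p} _.

Definition full_graph (V E : Type) (r s : E -> V) : pgraph :=
  @PGraph V E (fun _ => True) (fun _ => True) r s.

Definition wf_graph (G : pgraph) : Prop :=
  forall e : gE G, okE e -> okV (rg e) /\ okV (sg e).

Definition graph_hom (F E : pgraph) (hV : gV F -> gV E) (hE : gE F -> gE E) : Prop :=
  (forall v, okV v -> okV (hV v)) /\
  (forall f, okE f -> okE (hE f) /\ rg (hE f) = hV (rg f) /\ sg (hE f) = hV (sg f)).

Definition textile (F E : pgraph) (pV qV : gV F -> gV E) (pE qE : gE F -> gE E) : Prop :=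
  graph_hom pV pE /\ graph_hom qV qE /\
  (forall f g, okE f -> okE g -> rg f = rg g -> pE f = pE g -> sg f = sg g ->
     qE f = qE g -> f = g).

Definition unique_r_lifting (F E : pgraph) (hV : gV F -> gV E) (hE : gE F -> gE E) :=
  forall v e, okV v -> okE e -> hV v = rg e ->
    exists! f, okE f /\ rg f = v /\ hE f = e.

Definition unique_s_lifting (F E : pgraph) (hV : gV F -> gV E) (hE : gE F -> gE E) :=
  forall v e, okV v -> okE e -> hV v = sg e ->
    exists! f, okE f /\ sg f = v /\ hE f = e.

Definition LR_textile (F E : pgraph) (pV qV : gV F -> gV E) (pE qE : gE F -> gE E) :=
  textile pV qV pE qE /\ unique_r_lifting pV pE /\ unique_s_lifting qV qE.

(* An indexed partition {P^0_v,...,P^(m v - 1)_v} of vG^1 into nonempty  *)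
(* sets, given by the block index idx e of each edge e (e is in block    *)
(* idx e of the partition of (r e)G^1). Indices are 0-based.             *)
Definition is_ipartition (G : pgraph) (m : gV G -> nat) (idx : gE G -> nat) : Prop :=
  (forall e, okE e -> idx e < m (rg e)) /\
  (forall v i, okV v -> i < m v -> exists e, okE e /\ rg e = v /\ idx e = i).

(* Directed-graph insplitting: vertices v^i = (v,i), i < m v;            *)
(* edges f^j = (f,j), j < m (s f); s(f^j) = s(f)^j; r(f^j) = r(f)^(idx f) *)
Definition insplit (G : pgraph) (m : gV G -> nat) (idx : gE G -> nat) : pgraph :=
  @PGraph (gV G * nat) (gE G * nat)
    (fun x => okV x.1 /\ x.2 < m x.1)
    (fun y => okE y.1 /\ y.2 < m (sg y.1))
    (fun y => (rg y.1, idx y.1))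
    (fun y => (sg y.1, y.2)).

(* 2-graphs, given by their 1-skeleton (colour false = 1, true = 2)    *)
(* and their commuting squares: ksq x y a b means  x y ~ a b  (x,a at  *)
(* the range end).                                                     *)
Record kgraph2 := KGraph2 {
  kV : Type; kE : Type;
  okkV : kV -> Prop; okkE : kE -> Prop;
  kdeg : kE -> bool;
  kr : kE -> kV; ks : kE -> kV;
  ksq : kE -> kE -> kE -> kE -> Prop }.
Arguments okkV {k} _. Arguments okkE {k} _. Arguments kdeg {k} _.
Arguments kr {k} _. Arguments ks {k} _. Arguments ksq {k} _ _ _ _.

(* Lambda_T: vertices E^0, colour-1 edges E^1, colour-2 edges F^0 with  *)
(* r(w) = q(w), s(w) = p(w); squares v e ~ e' w iff some f in F^1 has   *)
(* r f = v, s f = w, p f = e, q f = e' (relation taken symmetric).       *)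
Definition LambdaT (F E : pgraph) (pV qV : gV F -> gV E) (pE qE : gE F -> gE E)
  : kgraph2 :=
  @KGraph2 (gV E) (gE E + gV F)
    (fun z => okV z)
    (fun x => match x with inl e => okE e | inr w => okV w end)
    (fun x => match x with inl _ => false | inr _ => true end)
    (fun x => match x with inl e => rg e | inr w => qV w end)
    (fun x => match x with inl e => sg e | inr w => pV w end)
    (fun x y a b =>
       exists f, okE f /\
         ((x = inr (rg f) /\ y = inl (pE f) /\ a = inl (qE f) /\ b = inr (sg f)) \/
          (x = inl (qE f) /\ y = inr (sg f) /\ a = inr (rg f) /\ b = inl (pE f)))).

(* A partition {G^i_z : i < m z} of Lambda^1 (blocks given as predicates *)
(* mem z i), each {G^i_z}_i a partition of z Lambda^1 into nonempty sets. *)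
Definition is_kpartition (L : kgraph2) (m : kV L -> nat)
  (mem : kV L -> nat -> kE L -> Prop) : Prop :=
  (forall z i x, okkV z -> i < m z -> mem z i x -> okkE x /\ kr x = z) /\
  (forall x, okkE x -> exists! i, i < m (kr x) /\ mem (kr x) i x) /\
  (forall z i, okkV z -> i < m z -> exists x, okkE x /\ mem z i x).

(* pairing condition: for lambda of degree (1,1), factored as x y ~ a b, *)
(* the range-end edges lambda(0,e1), lambda(0,e2) (= x and a) lie in the *)
(* same block.                                                           *)
Definition pairing (L : kgraph2) (m : kV L -> nat)
  (mem : kV L -> nat -> kE L -> Prop) : Prop :=
  forall x y a b, okkE x -> okkE y -> okkE a -> okkE b -> ksq x y a b ->
    exists i, i < m (kr x) /\ mem (kr x) i x /\ mem (kr x) i a.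

(* 2-graph insplitting with respect to the partition mem, where idx x is *)
(* the index of the block of G_{r x} containing x:                        *)
(* vertices z^i, edges f^i (i < m (s f)), s(f^i) = s(f)^i,                *)
(* r(f^i) = r(f)^(idx f);  f^i g^k ~ a^j b^k iff g in G^i_{s f},          *)
(* b in G^j_{s a} and f g ~ a b.                                          *)
Definition LambdaI (L : kgraph2) (m : kV L -> nat) (idx : kE L -> nat)
  (mem : kV L -> nat -> kE L -> Prop) : kgraph2 :=
  @KGraph2 (kV L * nat) (kE L * nat)
    (fun z => okkV z.1 /\ z.2 < m z.1)
    (fun x => okkE x.1 /\ x.2 < m (ks x.1))
    (fun x => kdeg x.1)
    (fun x => (kr x.1, idx x.1))
    (fun x => (ks x.1, x.2))
    (fun x y a b => y.2 = b.2 /\ mem (ks x.1) x.2 y.1 /\ mem (ks a.1) a.2 b.1 /\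
                    ksq x.1 y.1 a.1 b.1).

(* "coincide" via the naming maps phV (vertices), phE (edges):          *)
(* bijections on valid elements preserving degree, range, source and     *)
(* commuting squares.                                                    *)
Definition coincide (L1 L2 : kgraph2) (phV : kV L1 -> kV L2) (phE : kE L1 -> kE L2)
  : Prop :=
  (forall z, okkV z <-> okkV (phV z)) /\
  (forall z', okkV z' -> exists z, okkV z /\ phV z = z') /\
  (forall z z', okkV z -> okkV z' -> phV z = phV z' -> z = z') /\
  (forall x, okkE x <-> okkE (phE x)) /\
  (forall x', okkE x' -> exists x, okkE x /\ phE x = x') /\
  (forall x x', okkE x -> okkE x' -> phE x = phE x' -> x = x') /\
  (forall x, okkE x -> kdeg (phE x) = kdeg x /\ kr (phE x) = phV (kr x) /\
                       ks (phE x) = phV (ks x)) /\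
  (forall x y a b, okkE x -> okkE y -> okkE a -> okkE b ->
     (ksq x y a b <-> ksq (phE x) (phE y) (phE a) (phE b))).

(* naming: e^i |-> (e,i) as an edge of Lambda_I, v^i |-> (v,i) *)
Definition name_edge (A B : Type) (x : (A * nat) + (B * nat)) : (A + B) * nat :=
  match x with inl (e, i) => (inl e, i) | inr (v, i) => (inr v, i) end.

(* Everything hinges on one observation: since q maps all of uF^1 into the
   single block E^{jq u}, the block G^i_z of an edge x of Lambda_T is just
   i = idx_E x for x in E^1 and i = jq x for x in F^0, with z = r x.  The
   path-lifting properties of p and q then lift verbatim to the insplit
   graphs, the copy index travelling along the lifted edge, and a commuting
   square of Lambda_T~ coming from an edge f^k of F~ is exactly the square of
   Lambda_T coming from f, decorated with the indices that Lambda_I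
   prescribes. *)

From mathcomp Require Import all_boot.

Set Implicit Arguments.
Unset Strict Implicit.
Unset Printing Implicit Defensive.

Lemma full_graph_wf (V A : Type) (r s : A -> V) : wf_graph (full_graph r s).
Proof. by []. Qed.

Lemma insplit_wf (G : pgraph) (m : gV G -> nat) (idx : gE G -> nat) :
  wf_graph G -> is_ipartition m idx -> wf_graph (insplit m idx).
Proof.
move=> wfG [idx_lt _] [e j] /= [okEe j_lt].
by case: (wfG e okEe) => okr oks; split; split=> //; apply: idx_lt.
Qed.

Section InsplitTextile.

Variables (VE EE VF EF : Type) (rE sE : EE -> VE) (rF sF : EF -> VF).
Local Notation F := (full_graph rF sF).
Local Notation E := (full_graph rE sE).

Lemma full_graph_homP (hV : VF -> VE) (hE : EF -> EE) :
  graph_hom (F := F) (E := E) hV hE <->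
  forall f, rE (hE f) = hV (rF f) /\ sE (hE f) = hV (sF f).
Proof. by split=> [[_ hom] f | hom]; [case: (hom f I) | split=> // f _; split]. Qed.

Variables (m : VE -> nat) (idx : EE -> nat).

Lemma ipartition_pullback (hV : VF -> VE) (hE : EF -> EE) :
  graph_hom (F := F) (E := E) hV hE -> unique_r_lifting (F := F) (E := E) hV hE ->
  is_ipartition (G := E) m idx ->
  is_ipartition (G := F) (fun v => m (hV v)) (fun f => idx (hE f)).
Proof.
move=> /full_graph_homP hom lift [idx_lt blocks]; split=> [f _ | v i _ i_lt] /=.
  by case: (hom f) => <- _; apply: idx_lt.
case: (blocks (hV v) i I i_lt) => e [_ [re idx_e]].
case: (lift v e I I (esym re)) => f [[_ [rf hf]] _].
by exists f; rewrite /= hf.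
Qed.

Local Notation Ft_of hV hE := (insplit (G := F) (fun v => m (hV v)) (fun f => idx (hE f))).
Local Notation Et := (insplit (G := E) m idx).
Local Notation split_hV hV := (fun x : VF * nat => (hV x.1, x.2)).
Local Notation split_hE hE := (fun y : EF * nat => (hE y.1, y.2)).
Local Notation const_hV hV c := (fun x : VF * nat => (hV x.1, c x.1)).
Local Notation const_hE hE c := (fun y : EF * nat => (hE y.1, c (sF y.1))).

Lemma insplit_hom_pullback (hV : VF -> VE) (hE : EF -> EE) :
  graph_hom (F := F) (E := E) hV hE ->
  graph_hom (F := Ft_of hV hE) (E := Et) (split_hV hV) (split_hE hE).
Proof.
move=> /full_graph_homP hom; split=> [[v i] //| [f j] /= [_ j_lt]].
by case: (hom f) => -> ->.
Qed.

Lemma insplit_hom_const (hV : VF -> VE) (hE : EF -> EE) (c : VF -> nat)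
    (mF : VF -> nat) (idxF : EF -> nat) :
  graph_hom (F := F) (E := E) hV hE ->
  (forall f, idx (hE f) = c (rF f)) -> (forall v, c v < m (hV v)) ->
  graph_hom (F := insplit (G := F) mF idxF) (E := Et) (const_hV hV c) (const_hE hE c).
Proof.
move=> /full_graph_homP hom idx_c c_lt; split=> [[v i] _ | [f j] _] /=.
  by split=> //; apply: c_lt.
by case: (hom f) => -> ->; rewrite idx_c; split=> //; split=> //; apply: c_lt.
Qed.

Lemma insplit_unique_r_lifting (hV : VF -> VE) (hE : EF -> EE) :
  graph_hom (F := F) (E := E) hV hE -> unique_r_lifting (F := F) (E := E) hV hE ->
  unique_r_lifting (F := Ft_of hV hE) (E := Et) (split_hV hV) (split_hE hE).
Proof.
move=> /full_graph_homP hom lift [v i] [e j] /= _ [_ j_lt] [re idx_e].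
case: (lift v e I I re) => f [[_ [/= rf hf]] uniq_f].
exists (f, j); split=> [| [g k] /= [[_ _] [[rg_g _] [hg ->]]]].
  by case: (hom f) => _ sf; rewrite /= -sf hf rf idx_e.
by rewrite (uniq_f g (conj I (conj rg_g hg))).
Qed.

Lemma insplit_unique_s_lifting (hV : VF -> VE) (hE : EF -> EE) (c : VF -> nat)
    (mF : VF -> nat) (idxF : EF -> nat) :
  unique_s_lifting (F := F) (E := E) hV hE ->
  unique_s_lifting (F := insplit (G := F) mF idxF) (E := Et) (const_hV hV c) (const_hE hE c).
Proof.
move=> lift [v i] [e j] /= [_ i_lt] _ [se c_v].
case: (lift v e I I se) => f [[_ [/= sf hf]] uniq_f].
exists (f, i); split=> [| [g k] /= [_ [[sg_g ->] [hg _]]]].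
  by rewrite /= sf hf c_v.
by rewrite (uniq_f g (conj I (conj sg_g hg))).
Qed.

Lemma insplit_LR_textile (pV qV : VF -> VE) (pE qE : EF -> EE) (c : VF -> nat) :
  LR_textile (F := F) (E := E) pV qV pE qE ->
  (forall f, idx (qE f) = c (rF f)) -> (forall v, c v < m (qV v)) ->
  LR_textile (F := Ft_of pV pE) (E := Et)
    (split_hV pV) (const_hV qV c) (split_hE pE) (const_hE qE c).
Proof.
move=> [[hom_p [hom_q inj]] [lift_p lift_q]] idx_c c_lt.
split; last split; [split; last split | |].
- exact: insplit_hom_pullback.
- exact: insplit_hom_const.
- move=> [f j] [g k] _ _ [rfg _] [pfg <-] [sfg] [qfg _].
  by rewrite (inj f g I I rfg pfg sfg qfg).
- exact: insplit_unique_r_lifting.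
- exact: insplit_unique_s_lifting.
Qed.

End InsplitTextile.

Definition unname_edge (A B : Type) (x : (A + B) * nat) : (A * nat) + (B * nat) :=
  match x with (inl e, i) => inl (e, i) | (inr v, i) => inr (v, i) end.

Lemma name_edgeK (A B : Type) : cancel (@name_edge A B) (@unname_edge A B).
Proof. by case=> [[]|[]]. Qed.

Lemma unname_edgeK (A B : Type) : cancel (@unname_edge A B) (@name_edge A B).
Proof. by case=> [[]]. Qed.

Section InsplitTwoGraph.

Variables (VE EE VF EF : Type) (rE sE : EE -> VE) (rF sF : EF -> VF).
Variables (pV qV : VF -> VE) (pE qE : EF -> EE).
Variables (m : VE -> nat) (idxE : EE -> nat) (jq : VF -> nat).
Local Notation F := (full_graph rF sF).
Local Notation E := (full_graph rE sE).

Hypothesis hom_p : graph_hom (F := F) (E := E) pV pE.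
Hypothesis hom_q : graph_hom (F := F) (E := E) qV qE.
Hypothesis source_free : forall v, exists f, rF f = v.
Hypothesis part_E : is_ipartition (G := E) m idxE.
Hypothesis jqE : forall f, idxE (qE f) = jq (rF f).

Local Notation L := (LambdaT (F := F) (E := E) pV qV pE qE).

Lemma idxE_lt e : idxE e < m (rE e).
Proof. exact: (proj1 part_E) e I. Qed.

Lemma jq_lt v : jq v < m (qV v).
Proof.
case: (source_free v) => f <-; move/full_graph_homP: hom_q => /(_ f) [<- _].
by rewrite -jqE; apply: idxE_lt.
Qed.

Definition kblock (z : VE) (i : nat) (x : EE + VF) : Prop :=
  match x with
  | inl e => rE e = z /\ idxE e = i
  | inr u => exists f, rF f = u /\ rE (qE f) = z /\ idxE (qE f) = i
  end.

(* keeps [kblock] folded under [/=], so that [kblockE] still applies *)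
Arguments kblock : simpl never.

Definition kblock_idx (x : EE + VF) : nat :=
  match x with inl e => idxE e | inr u => jq u end.

Lemma kblockE z i x : kblock z i x <-> kr (k := L) x = z /\ kblock_idx x = i.
Proof.
move/full_graph_homP: hom_q => qrs.
case: x => [e|u] //=; split=> [[f [<- [<- <-]]] | [<- <-]].
  by case: (qrs f) => -> _; rewrite jqE.
by case: (source_free u) => f <-; exists f; case: (qrs f) => -> _; rewrite jqE.
Qed.

Lemma kblock_idx_lt x : kblock_idx x < m (kr (k := L) x).
Proof. by case: x => [e|u]; [apply: idxE_lt | apply: jq_lt]. Qed.

Lemma kblock_kpartition : is_kpartition (L := L) m kblock.
Proof.
split; last split.
- by move=> z i [e|u] _ _ /kblockE [<- _].
- move=> x _; exists (kblock_idx x); split=> [|i [_ /kblockE [_ //]]].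
  by split; [apply: kblock_idx_lt | apply/kblockE].
- move=> z i _ i_lt; case: (proj2 part_E z i I i_lt) => e [_ blk].
  by exists (inl e).
Qed.

Lemma kblock_pairing : pairing (L := L) m kblock.
Proof.
move/full_graph_homP: hom_q => qrs.
move=> x y a b _ _ _ _ [f [_ [[-> [_ [-> _]]] | [-> [_ [-> _]]]]]].
- exists (jq (rF f)); split; first exact: kblock_idx_lt.
  by case: (qrs f) => rq _; split; apply/kblockE; rewrite /= ?rq ?jqE.
- exists (jq (rF f)); split; first by rewrite /= -jqE; apply: idxE_lt.
  by case: (qrs f) => rq _; split; apply/kblockE; rewrite /= ?rq ?jqE.
Qed.

Local Notation Ft := (insplit (G := F) (fun v => m (pV v)) (fun f => idxE (pE f))).
Local Notation Et := (insplit (G := E) m idxE).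
Local Notation Lt := (LambdaT (F := Ft) (E := Et)
  (fun x : VF * nat => (pV x.1, x.2)) (fun x : VF * nat => (qV x.1, jq x.1))
  (fun y : EF * nat => (pE y.1, y.2)) (fun y : EF * nat => (qE y.1, jq (sF y.1)))).
Local Notation LI idxL := (LambdaI (L := L) m idxL kblock).

Lemma LambdaT_insplit_sq idxL x y a b :
  ksq (k := Lt) x y a b ->
  ksq (k := LI idxL) (name_edge x) (name_edge y) (name_edge a) (name_edge b).
Proof.
move/full_graph_homP: hom_p => prs; move/full_graph_homP: hom_q => qrs.
move=> [[f k] [_ [[-> [-> [-> ->]]] | [-> [-> [-> ->]]]]]] /=.
- split=> //; split; first by apply/kblockE; case: (prs f) => /= -> _.
  split; first by apply/kblockE; case: (qrs f) => /= _ ->.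
  by exists f; split=> //; left.
- split=> //; split; first by apply/kblockE; case: (qrs f) => /= _ ->.
  split; first by apply/kblockE; case: (prs f) => /= -> _.
  by exists f; split=> //; right.
Qed.

Lemma LambdaI_sq_unname idxL X Y A B :
  okkE (k := LI idxL) Y -> ksq (k := LI idxL) X Y A B ->
  ksq (k := Lt) (unname_edge X) (unname_edge Y) (unname_edge A) (unname_edge B).
Proof.
move/full_graph_homP: hom_p => prs; move/full_graph_homP: hom_q => qrs.
case: X Y A B => [X i] [Y k] [A j] [B l] /= [_ k_lt] [/= <-].
move=> [/kblockE [_ blkY] [/kblockE [_ blkB] [f [_ sq]]]].
case: sq => [[EX [EY [EA EB]]] | [EX [EY [EA EB]]]]; subst X Y A B.
- exists (f, k); split; last by left; subst i j; repeat split.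
  by split=> //; case: (prs f) => _ <-.
- by exists (f, k); split; last (right; subst i j; repeat split).
Qed.

Lemma name_edge_ok idxL x : okkE (k := Lt) x <-> okkE (k := LI idxL) (name_edge x).
Proof. by case: x => [[e i]|[v i]]. Qed.

Lemma LambdaT_insplit_coincide idxL :
  (forall x, kblock (kr (k := L) x) (idxL x) x) ->
  coincide (L1 := Lt) (L2 := LI idxL) (fun z => z) (@name_edge EE VF).
Proof.
move=> idxL_blk.
have idxLE x : idxL x = kblock_idx x by case/kblockE: (idxL_blk x).
split; [by [] | split; [by move=> z' ?; exists z' | split; [by [] | split]]].
  exact: name_edge_ok.
split; [move=> x' okx'; exists (unname_edge x') | split].
- by split; [apply/(name_edge_ok idxL); rewrite unname_edgeK | apply: unname_edgeK].
- by move=> x x' _ _ /(can_inj (@name_edgeK _ _)).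
split; first by move=> [[e i]|[v i]] _ /=; rewrite idxLE.
move=> x y a b _ oky _ _; split; first exact: LambdaT_insplit_sq.
move/(LambdaI_sq_unname (proj1 (name_edge_ok idxL y) oky)).
by rewrite !name_edgeK.
Qed.

End InsplitTwoGraph.

Theorem theorem7p11
  (VE EE VF EF : Type) (rE sE : EE -> VE) (rF sF : EF -> VF)
  (pV qV : VF -> VE) (pE qE : EF -> EE)
  (m : VE -> nat) (idxE : EE -> nat) :
  (* T = (p,q : F -> E) is an LR textile system *)
  LR_textile (F := full_graph rF sF) (E := full_graph rE sE) pV qV pE qE ->
  (* p is surjective *)
  (forall z : VE, exists v, pV v = z) ->
  (forall e : EE, exists f, pE f = e) ->
  (* F is source-free *)
  (forall v : VF, exists f, rF f = v) ->
  (* {E^i_z : i < m z} is a partition of zE^1 into nonempty sets *)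
  is_ipartition (G := full_graph rE sE) m idxE ->
  (* for each u in F^0 there are z, j with q(uF^1) contained in E^j_z *)
  (forall u : VF, exists z j, forall f, rF f = u -> rE (qE f) = z /\ idxE (qE f) = j) ->
  (* jq v := the index j with q(vF^1) contained in E^j_{q(v)} *)
  forall jq : VF -> nat, (forall f, idxE (qE f) = jq (rF f)) ->
  let F := full_graph rF sF in
  let E := full_graph rE sE in
  (* F^i_v = vF^1 /\ p^{-1}(E^i_{p v}): block index of f is idxE (p f) *)
  let mF := fun v => m (pV v) in
  let idxF := fun f => idxE (pE f) in
  let Ft := insplit (G := F) mF idxF in
  let Et := insplit (G := E) m idxE in
  let ptV := fun x : VF * nat => (pV x.1, x.2) in
  let ptE := fun y : EF * nat => (pE y.1, y.2) in
  let qtV := fun x : VF * nat => (qV x.1, jq x.1) in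
  let qtE := fun y : EF * nat => (qE y.1, jq (sF y.1)) in
  let L := LambdaT (F := F) (E := E) pV qV pE qE in
  (* G^i_z = E^i_z disjoint union r_F(q^{-1}(E^i_z)) *)
  let Gmem := fun (z : VE) (i : nat) (x : EE + VF) =>
    match x with
    | inl e => rE e = z /\ idxE e = i
    | inr u => exists f, rF f = u /\ rE (qE f) = z /\ idxE (qE f) = i
    end in
  (* (1) *)
  (is_ipartition (G := F) mF idxF /\
   wf_graph Ft /\ wf_graph Et /\
   graph_hom (F := Ft) (E := Et) ptV ptE /\
   graph_hom (F := Ft) (E := Et) qtV qtE /\
   LR_textile (F := Ft) (E := Et) ptV qtV ptE qtE) /\
  (* (2) *)
  (is_kpartition (L := L) m Gmem /\ pairing (L := L) m Gmem) /\
  (* (3): with idxL x the index of the block G^i_{r x} containing x *)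
  (forall idxL : EE + VF -> nat,
     (forall x, okkE (k := L) x -> idxL x < m (kr (k := L) x) /\ Gmem (kr (k := L) x) (idxL x) x) ->
     coincide (L1 := LambdaT (F := Ft) (E := Et) ptV qtV ptE qtE)
              (L2 := LambdaI (L := L) m idxL Gmem)
              (fun z => z) (@name_edge EE VF)).
Proof.
(* Surjectivity of p and the existence of the block index are not needed:
   [jq] already provides the index. *)
move=> LR_T _ _ source_free part_E _ jq jqE F E mF idxF Ft Et ptV ptE qtV qtE L Gmem.
have [[hom_p [hom_q _]] [lift_p _]] := LR_T.
have part_F := ipartition_pullback hom_p lift_p part_E.
split; [|split].
- have LR_Tt := insplit_LR_textile LR_T jqE (jq_lt hom_q source_free part_E jqE).
  have [[hom_pt [hom_qt _]] _] := LR_Tt.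
  split; first exact: part_F.
  split; first exact: insplit_wf (@full_graph_wf _ _ rF sF) part_F.
  split; first exact: insplit_wf (@full_graph_wf _ _ rE sE) part_E.
  by [].
- by split; [apply: kblock_kpartition | apply: kblock_pairing].
- move=> idxL idxL_lt_blk.
  have idxL_blk x : Gmem (kr (k := L) x) (idxL x) x.
    by case: (idxL_lt_blk x) => [|_ //]; case: x.
  exact: LambdaT_insplit_coincide idxL_blk.
Qed.
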